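(* For every propositional Hilbert-type calculus $\mathbf{C}$, its many-valued closure $\mathrm{MC}(\mathbf{C})$ has an effective sequential approximation.
   Context: A propositional language $\mathcal{L}$ has variables $X_1,X_2,\ldots$ and finitely many connectives with arities. A propositional Hilbert-type calculus $\mathbf{C}$ is given by a finite set of axioms (formulas) and a finite set of rules (premises $A_1,\ldots,A_n$, conclusion $C$). A finite-valued logic $\mathbf{M}$ is given by a finite set $V(\mathbf{M})$ of truth values, designated values $V^+(\mathbf{M})\subseteq V(\mathbf{M})$, and a truth function for each connective; valuations map variables to truth values and extend to formulas; a valuation satisfies $F$ if $F$ gets a designated value; a tautology is a formula satisfied by every valuation; $\mathrm{Taut}(\mathbf{M})$ is the set of tautologies; $\mathbf{M}_1\unlhd\mathbf{M}_2$ means $\mathrm{Taut}(\mathbf{M}_1)\subseteq\mathrm{Taut}(\mathbf{M}_2)$. $\mathbf{M}$ is a cover for $\mathbf{C}$ if all axioms of $\mathbf{C}$ are tautologies of $\mathbf{M}$ and for every rule every valuation satisfying all premises satisfies the conclusion. The many-valued closure $\mathrm{MC}(\mathbf{C})$ is the set of formulas that are tautologies of every finite-valued cover of $\mathbf{C}$. For a set $\mathbf{L}$ of formulas, a sequential approximation of $\mathbf{L}$ is a sequence $\langle\mathbf{M}_1,\mathbf{M}_2,\ldots\rangle$ of finite-valued logics over $\mathcal{L}$ with $\mathbf{M}_i\unlhd\mathbf{M}_j$ whenever $i\ge j$ and $\mathbf{L}=\bigcap_j\mathrm{Taut}(\mathbf{M}_j)$; it is effective if the sequence is effectively enumerated.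 *)

From Stdlib Require List.
From mathcomp Require Import all_boot.


Set Implicit Arguments.
Unset Strict Implicit.
Unset Printing Implicit Defensive.

(* A language is given by the list of arities of its finitely many
   connectives: connective number [c] has arity [nth 0 L c], for
   [c < size L]. *)
Definition lang := seq nat.

Inductive formula : Type :=
  | Var of nat
  | App of nat & seq formula.

Fixpoint wf_formula (L : lang) (F : formula) : bool :=
  match F with
  | Var _ => true
  | App c args =>
      [&& c < size L, size args == nth 0 L c
        & all id (map (wf_formula L) args)]
  end.

(* A finite-valued logic with truth values {0, ..., nv - 1}, designated
   values [des], and for each connective c a truth table [nth [::] tabs c],
   listing the value of c on the argument tuple (a_1,...,a_n) at position
   a_1 * nv^(n-1) + ... + a_n (base-nv digits, most significant first). *)
Record logic : Type := Logic {
  nv : nat;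
  des : seq nat;
  tabs : seq (seq nat)
}.

Definition wf_logic (L : lang) (M : logic) : bool :=
  [&& 0 < nv M,
      all (fun d => d < nv M) (des M),
      size (tabs M) == size L
    & all (fun c =>
             (size (nth [::] (tabs M) c) == nv M ^ nth 0 L c)
             && all (fun x => x < nv M) (nth [::] (tabs M) c))
          (iota 0 (size L))].

Definition tuple_index (k : nat) (xs : seq nat) : nat :=
  foldl (fun acc x => acc * k + x) 0 xs.

Fixpoint feval (M : logic) (v : nat -> nat) (F : formula) : nat :=
  match F with
  | Var n => v n
  | App c args =>
      nth 0 (nth [::] (tabs M) c) (tuple_index (nv M) (map (feval M v) args))
  end.

Definition valuation (M : logic) (v : nat -> nat) : Prop :=
  forall n, v n < nv M.

Definition satisfies (M : logic) (v : nat -> nat) (F : formula) : Prop :=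
  feval M v F \in des M.

Definition taut (L : lang) (M : logic) (F : formula) : Prop :=
  wf_formula L F /\ forall v, valuation M v -> satisfies M v F.

Definition taut_le (L : lang) (M1 M2 : logic) : Prop :=
  forall F, taut L M1 F -> taut L M2 F.

Record calculus : Type := Calculus {
  axioms : seq formula;
  rules : seq (seq formula * formula)
}.

Definition calculus_over (L : lang) (C : calculus) : Prop :=
  (forall A, List.In A (axioms C) -> wf_formula L A) /\
  (forall r, List.In r (rules C) ->
     (forall A, List.In A r.1 -> wf_formula L A) /\ wf_formula L r.2).

Definition cover (L : lang) (M : logic) (C : calculus) : Prop :=
  (forall A, List.In A (axioms C) -> taut L M A) /\
  (forall r, List.In r (rules C) ->
     forall v, valuation M v ->
       (forall A, List.In A r.1 -> satisfies M v A) -> satisfies M v r.2).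

Definition MC (L : lang) (C : calculus) (F : formula) : Prop :=
  wf_formula L F /\
  forall M, wf_logic L M -> cover L M C -> taut L M F.

(* The paper indexes M_1, M_2, ...; here indices start at 0. *)
Definition seq_approx (L : lang) (S : formula -> Prop) (M : nat -> logic) : Prop :=
  (forall j, wf_logic L (M j)) /\
  (forall i j, j <= i -> taut_le L (M i) (M j)) /\
  (forall F, S F <-> forall j, taut L (M j) F).

Inductive recf : Type :=
  | RZero
  | RSucc
  | RProj of nat
  | RComp of recf & seq recf
  | RPrec of recf & recf
  | RMin of recf.

Inductive reval : recf -> seq nat -> nat -> Prop :=
  | reval_zero xs : reval RZero xs 0
  | reval_succ xs : reval RSucc xs (head 0 xs).+1
  | reval_proj i xs : reval (RProj i) xs (nth 0 xs i)
  | reval_comp f gs xs ys y :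
      List.Forall2 (fun g z => reval g xs z) gs ys ->
      reval f ys y -> reval (RComp f gs) xs y
  | reval_prec0 f g xs y :
      reval f xs y -> reval (RPrec f g) (0 :: xs) y
  | reval_precS f g n xs r y :
      reval (RPrec f g) (n :: xs) r ->
      reval g (n :: r :: xs) y ->
      reval (RPrec f g) (n.+1 :: xs) y
  | reval_min f xs n :
      reval f (n :: xs) 0 ->
      (forall m, m < n -> exists r, reval f (m :: xs) r.+1) ->
      reval (RMin f) xs n.

(* Cantor pairing and the induced injective coding of lists of naturals. *)
Definition cpair (a b : nat) : nat := ((a + b) * (a + b).+1) %/ 2 + b.

Fixpoint code_seq (s : seq nat) : nat :=
  match s with
  | [::] => 0
  | x :: s' => (cpair x (code_seq s')).+1
  end.

Definition code_logic (M : logic) : nat :=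
  code_seq [:: nv M; code_seq (des M); code_seq (map code_seq (tabs M))].

Definition effective (M : nat -> logic) : Prop :=
  exists p : recf, forall n, reval p [:: n] (code_logic (M n)).

From Pilot Require Import Defs.
From mathcomp Require Import all_boot zify.

Set Implicit Arguments.
Unset Strict Implicit.
Unset Printing Implicit Defensive.

(* A finite-valued logic is a cover of C iff its axioms and rules hold under
   the finitely many valuations of the variables they mention, so being a cover
   is decidable.  Enumerate all finite-valued logics, each presented by three
   numbers, replacing those that are not covers by the one-element logic (a
   cover in which every formula is a tautology).  The n-th approximation is the
   direct product of the first n + 1 enumerated logics.  The tautologies of a
   product are the common tautologies of its factors, so the sequence decreases,
   and as every cover is enumerated its intersection is MC(C).  Building the
   n-th product is arithmetic on the presenting numbers, hence partial
   recursive. *)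

(** * Positional notation *)

Lemma iotaSr m n : iota m n.+1 = rcons (iota m n) (m + n).
Proof. by rewrite -addn1 iotaD cats1. Qed.

Lemma sum_ltn x q : \sum_(0 <= j < x) (j < q : nat) = minn x q.
Proof.
elim: x => [|x IH]; first by rewrite big_geq ?min0n.
by rewrite big_nat_recr //= IH; case: ltnP; lia.
Qed.

Definition digit a x p := x %/ a ^ p %% a.

Lemma digit_add_high a x y j : 0 < a -> digit a (x + y * a ^ j.+1) j = digit a x j.
Proof.
move=> a_gt0; rewrite /digit expnS mulnA divnDMl ?expn_gt0 ?a_gt0 //.
by rewrite addnC modnMDl.
Qed.

Lemma digit_expansion_lt a N e :
  (forall p, p < N -> e p < a) -> \sum_(0 <= p < N) e p * a ^ p < a ^ N.
Proof.
elim: N => [|N IH] e_lt; first by rewrite big_geq.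
rewrite big_nat_recr //= expnS.
have := IH (fun p lt_pN => e_lt p (ltnW lt_pN)); have := e_lt N (ltnSn N).
move: (\sum_(0 <= p < N) _) (a ^ N) => s X; nia.
Qed.

Lemma digit_expansion a N e j : (forall p, p < N -> e p < a) -> j < N ->
  digit a (\sum_(0 <= p < N) e p * a ^ p) j = e j.
Proof.
elim: N => [//|N IH] e_lt lt_jN; have a_gt0 : 0 < a by have := e_lt j lt_jN; lia.
have e_lt' p : p < N -> e p < a by move=> lt_pN; apply/e_lt/ltnW.
rewrite big_nat_recr //=; have [lt_jN'|->] : j < N \/ j = N by lia.
  have -> : a ^ N = a ^ (N - j.+1) * a ^ j.+1 by rewrite -expnD subnK.
  by rewrite mulnA digit_add_high // IH.
rewrite /digit divnDMl ?expn_gt0 ?a_gt0 // divn_small ?add0n ?modn_small //.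
  exact: e_lt.
exact: digit_expansion_lt.
Qed.

Lemma tuple_index_rcons a xs x : tuple_index a (rcons xs x) = tuple_index a xs * a + x.
Proof. by rewrite /tuple_index foldl_rcons. Qed.

Lemma tuple_index_lt a xs : all (fun x => x < a) xs -> tuple_index a xs < a ^ size xs.
Proof.
elim/last_ind: xs => [|xs x IH]; first by rewrite expn0.
rewrite all_rcons size_rcons tuple_index_rcons expnS => /andP[lt_xa /IH].
move: (tuple_index a xs) (a ^ size xs) => t X; nia.
Qed.

Lemma tuple_index_digits a xs : all (fun x => x < a) xs ->
  [seq digit a (tuple_index a xs) (size xs - j.+1) | j <- iota 0 (size xs)] = xs.
Proof.
elim/last_ind: xs => [//|xs x IH]; rewrite all_rcons size_rcons => /andP[lt_xa lt_xsa].
have a_gt0 : 0 < a by lia.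
rewrite iotaSr map_rcons add0n subnn /digit expn0 divn1 tuple_index_rcons modnMDl modn_small //.
congr rcons; rewrite -[in RHS](IH lt_xsa); apply/eq_in_map => j; rewrite mem_iota => /andP[_ lt_j].
have -> : (size xs).+1 - j.+1 = (size xs - j.+1).+1 by lia.
by rewrite /digit expnSr (mulnC (a ^ _)) divnMA divnMDl // (divn_small lt_xa) addn0.
Qed.

Fixpoint formula_nested_ind (P : formula -> Prop) (HVar : forall n, P (Var n))
    (HApp : forall c args, (forall A, List.In A args -> P A) -> P (App c args))
    (F : formula) {struct F} : P F :=
  match F with
  | Var n => HVar n
  | App c args => HApp c args
      ((fix all_args (s : seq formula) : forall A, List.In A s -> P A :=
          match s with
          | [::] => fun A inA => False_ind _ inA
          | B :: s' => fun A inA =>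
              match inA with
              | or_introl eqBA => eq_ind B P (formula_nested_ind HVar HApp B) A eqBA
              | or_intror inA' => all_args s' A inA'
              end
          end) args)
  end.

Lemma all_In (T : Type) (p : pred T) s : all p s <-> forall x, List.In x s -> p x.
Proof.
elim: s => [//|y s IH] /=; split; first by move=> /andP[py /IH ps] x [<-|/ps].
by move=> H; rewrite H /=; [apply/IH => x sx; apply: H; right | left].
Qed.

Lemma map_In_eq (A B : Type) (f g : A -> B) s :
  (forall x, List.In x s -> f x = g x) -> map f s = map g s.
Proof. by elim: s => //= x s IH fg; rewrite fg ?IH //; [move=> y sy; apply: fg; right | left]. Qed.

Lemma wf_formula_arg L c args A : wf_formula L (App c args) -> List.In A args -> wf_formula L A.
Proof. by move=> /and3P[_ _]; rewrite all_map => /all_In; apply. Qed.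

Lemma table_entry_lt L M c t : wf_logic L M -> nth 0 (nth [::] (tabs M) c) t < nv M.
Proof.
move=> /and4P[nv_gt0 _ /eqP size_tabs /allP tabs_ok].
have [lt_cL|ge_cL] := ltnP c (size L); last first.
  by rewrite (nth_default [::]) ?size_tabs // nth_nil.
have /andP[_ /allP tab_lt] : (size (nth [::] (tabs M) c) == nv M ^ nth 0 L c)
    && all (fun x => x < nv M) (nth [::] (tabs M) c) by apply: tabs_ok; rewrite mem_iota.
have [lt_t|ge_t] := ltnP t (size (nth [::] (tabs M) c)); last by rewrite nth_default.
exact/tab_lt/mem_nth.
Qed.

Lemma feval_lt_nv L M v F : wf_logic L M -> valuation M v -> feval M v F < nv M.
Proof. by move=> wfM v_lt; case: F => [n|c args]; [apply: v_lt | exact: table_entry_lt wfM]. Qed.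

(** * Logics presented by three numbers *)

(* NLogic a D T presents the logic with truth values 0, ..., a - 1, whose
   designated values are the z with bit z of D set, and in which connective c
   maps the argument tuple of index t to the base-a digit of T at position
   t * size L + c. *)
Record nlogic := NLogic { nl_nv : nat; nl_des : nat; nl_tabs : nat }.

Definition nbit D z := odd (D %/ 2 ^ z).

Definition entry (L : lang) a T c t := digit a T (t * size L + c).

Definition decode (L : lang) (m : nlogic) : logic :=
  let a := nl_nv m in
  Logic a [seq z <- iota 0 a | nbit (nl_des m) z]
    (mkseq (fun c => mkseq (entry L a (nl_tabs m) c) (a ^ nth 0 L c)) (size L)).

Section Decode.

Variables (L : lang) (m : nlogic).
Hypothesis nv_gt0 : 0 < nl_nv m.

Lemma decode_wf : wf_logic L (decode L m).
Proof.
apply/and4P; split => //=.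
- by apply/allP => z; rewrite mem_filter mem_iota => /and3P[].
- by rewrite size_mkseq.
apply/allP => c; rewrite mem_iota => /andP[_ lt_cL].
rewrite nth_mkseq // size_mkseq eqxx /=.
by apply/allP => _ /mapP[t _ ->]; rewrite /entry /digit ltn_mod.
Qed.

Lemma satisfies_decode v F : valuation (decode L m) v ->
  satisfies (decode L m) v F <-> nbit (nl_des m) (feval (decode L m) v F).
Proof.
move=> v_lt; have lt_nv : feval (decode L m) v F < nl_nv m := feval_lt_nv F decode_wf v_lt.
by rewrite /satisfies /= mem_filter mem_iota add0n lt_nv !andbT.
Qed.

Lemma feval_decode_App v c args : valuation (decode L m) v -> wf_formula L (App c args) ->
  feval (decode L m) v (App c args) =
  entry L (nl_nv m) (nl_tabs m) c (tuple_index (nl_nv m) [seq feval (decode L m) v A | A <- args]).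
Proof.
move=> v_lt wfF; have /and3P[lt_cL /eqP size_args _] := wfF.
rewrite /= nth_mkseq // nth_mkseq // -size_args -(size_map (feval (decode L m) v)).
apply: tuple_index_lt; rewrite all_map; apply/all_In => A _.
exact: feval_lt_nv decode_wf v_lt.
Qed.

End Decode.

Definition encode_des a (P : nat -> bool) := \sum_(0 <= z < a) P z * 2 ^ z.

Lemma nbit_encode_des a P z : z < a -> nbit (encode_des a P) z = P z.
Proof.
move=> lt_za; have := @digit_expansion 2 a (fun z => nat_of_bool (P z)) z.
rewrite /digit modn2 => /(_ (fun p _ => leq_b1 (P p)) lt_za).
by rewrite /nbit; case: odd; case: (P z).
Qed.

Definition arity_max (L : lang) := \max_(n <- L) n.

Lemma arity_le_max L c : nth 0 L c <= arity_max L.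
Proof.
have [lt_cL|ge_cL] := ltnP c (size L); last by rewrite nth_default.
by apply: (leq_bigmax_seq (F := id)); rewrite ?mem_nth.
Qed.

Definition encode_tabs (L : lang) a (E : nat -> nat -> nat) :=
  \sum_(0 <= p < size L * a ^ arity_max L) E (p %% size L) (p %/ size L) * a ^ p.

Lemma entry_encode_tabs L a E c t : (forall c t, E c t < a) ->
  c < size L -> t < a ^ nth 0 L c -> entry L a (encode_tabs L a E) c t = E c t.
Proof.
move=> E_lt lt_cL lt_t; have a_gt0 : 0 < a by apply: leq_ltn_trans (E_lt 0 0).
have le_t : t < a ^ arity_max L by apply: leq_trans lt_t (leq_pexp2l a_gt0 (arity_le_max L c)).
rewrite /entry digit_expansion => [|p _|]; last 2 first.
- exact: E_lt.
- by move: (a ^ arity_max L) le_t => X; nia.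
by rewrite modnMDl modn_small // divnMDl ?divn_small ?addn0 //; lia.
Qed.

Definition encode (L : lang) (N : logic) : nlogic :=
  NLogic (nv N) (encode_des (nv N) (fun z => z \in des N))
    (encode_tabs L (nv N) (fun c t => nth 0 (nth [::] (tabs N) c) t)).

Section Encode.

Variables (L : lang) (N : logic).
Hypothesis wfN : wf_logic L N.

Lemma feval_encode v F : valuation N v -> wf_formula L F ->
  feval (decode L (encode L N)) v F = feval N v F.
Proof.
move=> v_lt; have nv_gt0 : 0 < nv N by case/and4P: wfN.
elim/formula_nested_ind: F => [//|c args IH] wfF.
rewrite (@feval_decode_App L (encode L N) nv_gt0 _ _ _ v_lt wfF).
rewrite (map_In_eq (g := feval N v)) => [|A inA]; last exact/IH/(wf_formula_arg wfF).
have /and3P[lt_cL /eqP size_args _] := wfF.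
rewrite entry_encode_tabs //; first by move=> c' t; exact: table_entry_lt wfN.
rewrite -size_args -(size_map (feval N v)); apply: tuple_index_lt.
by rewrite all_map; apply/all_In => A _; apply: feval_lt_nv wfN v_lt.
Qed.

Lemma satisfies_encode v F : valuation N v -> wf_formula L F ->
  satisfies (decode L (encode L N)) v F <-> satisfies N v F.
Proof.
move=> v_lt wfF; have nv_gt0 : 0 < nv N by case/and4P: wfN.
by rewrite satisfies_decode // feval_encode // nbit_encode_des //; apply: feval_lt_nv wfN v_lt.
Qed.

Lemma taut_encode F : taut L (decode L (encode L N)) F <-> taut L N F.
Proof. by split=> -[wfF sat]; split=> // v v_lt; apply/satisfies_encode => //; apply: sat. Qed.

Lemma cover_encode C : calculus_over L C ->
  Defs.cover L (decode L (encode L N)) C <-> Defs.cover L N C.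
Proof.
move=> [_ wf_rules]; split=> -[ax_taut rules_sound].
all: split=> [A inA|r /[dup] inr /wf_rules[wf_prem wf_concl] v v_lt prem].
1,3: exact/taut_encode/ax_taut.
all: apply/satisfies_encode/rules_sound => // A inA.
all: by apply/satisfies_encode/prem => //; apply: wf_prem.
Qed.

End Encode.

Definition trivial_nlogic := NLogic 1 1 0.

Lemma taut_trivial L F : wf_formula L F -> taut L (decode L trivial_nlogic) F.
Proof.
move=> wfF; split=> // v v_lt; apply/satisfies_decode => //.
have := feval_lt_nv F (@decode_wf L trivial_nlogic (ltn0Sn 0)) v_lt.
by rewrite ltnS leqn0 => /eqP ->.
Qed.

Lemma cover_trivial L C : calculus_over L C -> Defs.cover L (decode L trivial_nlogic) C.
Proof.
move=> [wf_ax wf_rules]; split=> [A /wf_ax /taut_trivial //|r /wf_rules[_ wf_concl] v v_lt _].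
exact: (taut_trivial wf_concl).2.
Qed.

(** * Deciding covers *)

Fixpoint var_bound (F : formula) : nat :=
  match F with
  | Var i => i.+1
  | App _ args => foldr maxn 0 (map var_bound args)
  end.

Lemma le_foldr_maxn (T : Type) (f : T -> nat) s x :
  List.In x s -> f x <= foldr maxn 0 (map f s).
Proof. by elim: s => //= y s IH [<-|/IH le_x]; rewrite leq_max ?leqnn ?le_x ?orbT. Qed.

Lemma feval_eq_on_vars M v w F :
  (forall i, i < var_bound F -> v i = w i) -> feval M v F = feval M w F.
Proof.
elim/formula_nested_ind: F => [n|c args IH] /= vw; first exact: vw.
congr (nth _ _ (tuple_index _ _)); apply: map_In_eq => A inA; apply: IH => // i lt_i.
exact/vw/(leq_trans lt_i)/(le_foldr_maxn var_bound).
Qed.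

Lemma satisfies_eq_on_vars M v w V F : var_bound F <= V ->
  (forall i, i < V -> v i = w i) -> satisfies M v F -> satisfies M w F.
Proof.
move=> le_FV vw; rewrite /satisfies (@feval_eq_on_vars M v w) // => i lt_i.
exact/vw/(leq_trans lt_i).
Qed.

Lemma forall_valuation_digits a V (Q : (nat -> nat) -> Prop) : 0 < a ->
  (forall v w, (forall i, i < V -> v i = w i) -> Q v -> Q w) ->
  (forall v, (forall i, v i < a) -> Q v) <-> (forall u, u < a ^ V -> Q (digit a u)).
Proof.
move=> a_gt0 Q_vars; split=> [Qv u _|Qu v v_lt]; first by apply: Qv => i; rewrite /digit ltn_mod.
pose u := \sum_(0 <= i < V) v i * a ^ i.
apply: (Q_vars (digit a u)) => [i lt_iV|]; first exact: digit_expansion.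
exact/Qu/digit_expansion_lt.
Qed.

Fixpoint coded_feval (L : lang) a T u (F : formula) : nat :=
  match F with
  | Var i => digit a u i
  | App c args => entry L a T c (tuple_index a (map (coded_feval L a T u) args))
  end.

Lemma coded_fevalE L m u F : 0 < nl_nv m -> wf_formula L F ->
  coded_feval L (nl_nv m) (nl_tabs m) u F = feval (decode L m) (digit (nl_nv m) u) F.
Proof.
move=> nv_gt0; elim/formula_nested_ind: F => [//|c args IH] wfF.
have u_lt : valuation (decode L m) (digit (nl_nv m) u) by move=> i; rewrite /digit ltn_mod.
rewrite feval_decode_App //=; congr (entry _ _ _ _ (tuple_index _ _)).
by apply: map_In_eq => A inA; apply/IH/(wf_formula_arg wfF).
Qed.

Definition holds_coded L m u A := nbit (nl_des m) (coded_feval L (nl_nv m) (nl_tabs m) u A).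

Definition rule_var_bound (r : seq formula * formula) :=
  maxn (var_bound r.2) (foldr maxn 0 (map var_bound r.1)).

Definition coverb (L : lang) (C : calculus) (m : nlogic) :=
  all (fun A => all (fun u => holds_coded L m u A) (iota 0 (nl_nv m ^ var_bound A)))
    (axioms C) &&
  all (fun r => all (fun u => all (holds_coded L m u) r.1 ==> holds_coded L m u r.2)
                    (iota 0 (nl_nv m ^ rule_var_bound r)))
    (rules C).

Section DecideCover.

Variables (L : lang) (m : nlogic).
Hypothesis nv_gt0 : 0 < nl_nv m.

Lemma holds_codedE u A : wf_formula L A ->
  holds_coded L m u A <-> satisfies (decode L m) (digit (nl_nv m) u) A.
Proof.
move=> wfA; rewrite satisfies_decode // => [|i]; last by rewrite /digit ltn_mod.
by rewrite /holds_coded coded_fevalE.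
Qed.

Lemma all_iota_digits V (Q : (nat -> nat) -> Prop) (q : nat -> bool) :
  (forall v w, (forall i, i < V -> v i = w i) -> Q v -> Q w) ->
  (forall u, q u <-> Q (digit (nl_nv m) u)) ->
  (forall v, valuation (decode L m) v -> Q v) <-> all q (iota 0 (nl_nv m ^ V)).
Proof.
move=> Q_vars qQ; rewrite (forall_valuation_digits nv_gt0 Q_vars).
split=> [Qu|/allP all_q u lt_u]; last by apply/qQ/all_q; rewrite mem_iota.
by apply/allP => u; rewrite mem_iota add0n => /andP[_ /Qu /qQ].
Qed.

Lemma axiom_validP A : wf_formula L A ->
  (forall v, valuation (decode L m) v -> satisfies (decode L m) v A) <->
  all (fun u => holds_coded L m u A) (iota 0 (nl_nv m ^ var_bound A)).
Proof.
move=> wfA; apply: all_iota_digits => [v w|u]; last exact: holds_codedE.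
exact: satisfies_eq_on_vars.
Qed.

Lemma rule_soundP r : (forall A, List.In A r.1 -> wf_formula L A) -> wf_formula L r.2 ->
  (forall v, valuation (decode L m) v ->
     (forall A, List.In A r.1 -> satisfies (decode L m) v A) -> satisfies (decode L m) v r.2) <->
  all (fun u => all (holds_coded L m u) r.1 ==> holds_coded L m u r.2)
      (iota 0 (nl_nv m ^ rule_var_bound r)).
Proof.
move=> wf_prem wf_concl; apply: all_iota_digits => [v w vw prem_v prem_w|u].
  have wv i : i < rule_var_bound r -> w i = v i by move/vw.
  apply: satisfies_eq_on_vars (leq_maxl _ _) vw (prem_v _) => A inA.
  apply: satisfies_eq_on_vars wv (prem_w A inA).
  exact: leq_trans (le_foldr_maxn var_bound inA) (leq_maxr _ _).
split=> [/implyP q_u prem|Q_u].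
  apply/holds_codedE/q_u/all_In => // A inA.
  by apply/holds_codedE/prem => //; apply: wf_prem.
apply/implyP => /all_In prem; apply/holds_codedE/Q_u => // A inA.
by apply/holds_codedE/prem => //; apply: wf_prem.
Qed.

Lemma coverP C : calculus_over L C -> reflect (Defs.cover L (decode L m) C) (coverb L C m).
Proof.
move=> [wf_ax wf_rules].
apply: (iffP andP) => [[/all_In ax_ok /all_In rules_ok]|[ax_taut rules_sound]].
  split=> [A inA|r /[dup] inr /wf_rules[wf_prem wf_concl]].
    by split; [exact: wf_ax | apply/axiom_validP/ax_ok => //; exact: wf_ax].
  exact/rule_soundP/rules_ok.
split; apply/all_In.
  by move=> A inA; apply/axiom_validP; [exact: wf_ax | case: (ax_taut A inA)].
move=> r /[dup] inr /wf_rules[wf_prem wf_concl].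
exact/rule_soundP/rules_sound.
Qed.

End DecideCover.

(** * Direct products *)

(* The pair (x, y) of truth values is the value x * b + y of the product, so
   digit j of a product argument tuple splits as (d %/ b, d %% b). *)
Definition prod_entry (L : lang) (m m' : nlogic) c t :=
  let: (a, b, r) := (nl_nv m, nl_nv m', nth 0 L c) in
  let d j := digit (a * b) t (r - j.+1) in
  entry L a (nl_tabs m) c (tuple_index a [seq d j %/ b | j <- iota 0 r]) * b +
  entry L b (nl_tabs m') c (tuple_index b [seq d j %% b | j <- iota 0 r]).

Definition nprod (L : lang) (m m' : nlogic) : nlogic :=
  let: (a, b) := (nl_nv m, nl_nv m') in
  NLogic (a * b)
    (encode_des (a * b) (fun z => nbit (nl_des m) (z %/ b) && nbit (nl_des m') (z %% b)))
    (encode_tabs L (a * b) (prod_entry L m m')).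

Lemma mixed_lt a b x y : x < a -> y < b -> x * b + y < a * b.
Proof. by move=> lt_xa lt_yb; nia. Qed.

Section Product.

Variables (L : lang) (m m' : nlogic).
Local Notation a := (nl_nv m).
Local Notation b := (nl_nv m').
Hypotheses (a_gt0 : 0 < a) (b_gt0 : 0 < b).

Lemma prod_entry_tuple (T : Type) c (s : seq T) X Y :
  size s = nth 0 L c -> (forall x, X x < a) -> (forall x, Y x < b) ->
  prod_entry L m m' c (tuple_index (a * b) [seq X x * b + Y x | x <- s]) =
  entry L a (nl_tabs m) c (tuple_index a (map X s)) * b +
  entry L b (nl_tabs m') c (tuple_index b (map Y s)).
Proof.
move=> size_s X_lt Y_lt; set xs := [seq X x * b + Y x | x <- s].
have xs_lt : all (fun z => z < a * b) xs by rewrite all_map; apply/all_In => x _; apply: mixed_lt.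
have digits := tuple_index_digits xs_lt; rewrite size_map size_s in digits.
have digitsE (g : nat -> nat) : [seq g (digit (a * b) (tuple_index (a * b) xs) (nth 0 L c - j.+1))
    | j <- iota 0 (nth 0 L c)] = map g xs by rewrite -[in RHS]digits -map_comp.
rewrite /prod_entry /= (digitsE (divn^~ b)) (digitsE (modn^~ b)) -!map_comp.
congr (entry _ _ _ _ (tuple_index _ _) * _ + entry _ _ _ _ (tuple_index _ _)).
  by apply: eq_map => x /=; rewrite divnMDl // divn_small // addn0.
by apply: eq_map => x /=; rewrite modnMDl modn_small.
Qed.

Lemma nprod_nv_gt0 : 0 < nl_nv (nprod L m m').
Proof. by rewrite muln_gt0 a_gt0. Qed.

Section Valuation.

Variable v : nat -> nat.
Hypothesis v_lt : valuation (decode L (nprod L m m')) v.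

Let v1 i := v i %/ b.
Let v2 i := v i %% b.

Lemma valuation_fst : valuation (decode L m) v1.
Proof. by move=> i; rewrite /v1 ltn_divLR // v_lt. Qed.

Lemma valuation_snd : valuation (decode L m') v2.
Proof. by move=> i; rewrite /v2 ltn_mod. Qed.

Lemma feval_nprod F : wf_formula L F ->
  feval (decode L (nprod L m m')) v F = feval (decode L m) v1 F * b + feval (decode L m') v2 F.
Proof.
elim/formula_nested_ind: F => [n|c args IH] wfF; first by rewrite /= -divn_eq.
have /and3P[lt_cL /eqP size_args _] := wfF.
have X_lt A : feval (decode L m) v1 A < a := feval_lt_nv A (decode_wf L a_gt0) valuation_fst.
have Y_lt A : feval (decode L m') v2 A < b := feval_lt_nv A (decode_wf L b_gt0) valuation_snd.
rewrite (feval_decode_App nprod_nv_gt0 v_lt wfF) (feval_decode_App a_gt0 valuation_fst wfF).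
rewrite (feval_decode_App b_gt0 valuation_snd wfF).
set XY := fun A => feval (decode L m) v1 A * b + feval (decode L m') v2 A.
rewrite (map_In_eq (g := XY)) => [|A inA]; last exact/IH/(wf_formula_arg wfF).
rewrite entry_encode_tabs // ?prod_entry_tuple // => [c' t|].
  by apply: mixed_lt; rewrite /entry /digit ltn_mod.
rewrite -size_args -(size_map XY).
by apply: tuple_index_lt; rewrite all_map; apply/all_In => A _; apply: mixed_lt.
Qed.

Lemma satisfies_nprod F : wf_formula L F ->
  satisfies (decode L (nprod L m m')) v F <->
  satisfies (decode L m) v1 F /\ satisfies (decode L m') v2 F.
Proof.
move=> wfF; have X_lt := feval_lt_nv F (decode_wf L a_gt0) valuation_fst.
have Y_lt := feval_lt_nv F (decode_wf L b_gt0) valuation_snd.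
rewrite (satisfies_decode nprod_nv_gt0 _ v_lt) (satisfies_decode a_gt0 _ valuation_fst).
rewrite (satisfies_decode b_gt0 _ valuation_snd).
rewrite feval_nprod // nbit_encode_des; last exact: mixed_lt.
rewrite divnMDl // divn_small // addn0 modnMDl modn_small //.
by split=> [/andP|[-> ->]].
Qed.

End Valuation.

Lemma taut_nprod F :
  taut L (decode L (nprod L m m')) F <-> taut L (decode L m) F /\ taut L (decode L m') F.
Proof.
split=> [[wfF taut_prod]|[[wfF taut1] [_ taut2]]]; last first.
  split=> // v v_lt; apply/satisfies_nprod => //.
  by split; [apply/taut1/valuation_fst | apply/taut2/valuation_snd].
have pair_lt x y : x < a -> y < b -> x * b + y < nl_nv (nprod L m m') by apply: mixed_lt.
split; split=> // w w_lt.
  have w_lt' : valuation (decode L (nprod L m m')) (fun i => w i * b + 0).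
    by move=> i; apply: pair_lt.
  have [sat1 _] := (satisfies_nprod w_lt' wfF).1 (taut_prod _ w_lt').
  by apply: satisfies_eq_on_vars sat1 => // i _; rewrite divnMDl // div0n addn0.
have w_lt' : valuation (decode L (nprod L m m')) (fun i => 0 * b + w i).
  by move=> i; apply: pair_lt.
have [_ sat2] := (satisfies_nprod w_lt' wfF).1 (taut_prod _ w_lt').
by apply: satisfies_eq_on_vars sat2 => // i _; rewrite modnMDl modn_small.
Qed.

End Product.

(** * The approximating sequence *)

(* (pair2 x y).+1 = 2 ^ x * (2 * y + 1), and unpair1 k counts the powers
   2 ^ j.+1 dividing k.+1. *)
Definition pair2 x y := (2 ^ x * y.*2.+1).-1.
Definition unpair1 k := \sum_(0 <= j < k.+1) (k.+1 %% 2 ^ j.+1 == 0 : nat).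
Definition unpair2 k := (k.+1 %/ 2 ^ unpair1 k).-1 %/ 2.

Lemma pair2K x y : unpair1 (pair2 x y) = x /\ unpair2 (pair2 x y) = y.
Proof.
have pairS : (pair2 x y).+1 = 2 ^ x * y.*2.+1 by rewrite prednK // muln_gt0 expn_gt0.
have unpair1K : unpair1 (pair2 x y) = x.
  rewrite /unpair1 pairS (eq_bigr (fun j => (j < x : nat))) => [|j _].
    rewrite sum_ltn; apply/minn_idPr; have := ltn_expl x (ltnSn 1).
    by move: (2 ^ x) => X; nia.
  rewrite -/(dvdn _ _) Gauss_dvdl ?dvdn_Pexp2l //.
  by apply: coprimeXl; rewrite coprime2n /= odd_double.
split=> //; rewrite /unpair2 unpair1K pairS mulKn ?expn_gt0 //=.
by rewrite -muln2 mulnK.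
Qed.

Definition pack (m : nlogic) := pair2 (nl_nv m) (pair2 (nl_des m) (nl_tabs m)).
Definition unpack k := NLogic (unpair1 k) (unpair1 (unpair2 k)) (unpair2 (unpair2 k)).

Lemma packK : cancel pack unpack.
Proof.
move=> [a D T]; rewrite /unpack /pack /=.
have [-> ->] := pair2K a (pair2 D T); have [-> ->] := pair2K D T.
by [].
Qed.

Definition candidate (L : lang) (C : calculus) k :=
  let m := unpack k in if (0 < nl_nv m) && coverb L C m then m else trivial_nlogic.

Fixpoint approx (L : lang) (C : calculus) n :=
  if n is n'.+1 then nprod L (approx L C n') (candidate L C n) else candidate L C 0.

Section Approximation.

Variables (L : lang) (C : calculus).
Hypothesis C_over : calculus_over L C.

Lemma candidate_nv_gt0 k : 0 < nl_nv (candidate L C k).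
Proof. by rewrite /candidate; case: ifP => // /andP[]. Qed.

Lemma approx_nv_gt0 n : 0 < nl_nv (approx L C n).
Proof. by elim: n => [|n IH] /=; rewrite ?muln_gt0 ?IH candidate_nv_gt0. Qed.

Lemma cover_candidate k : Defs.cover L (decode L (candidate L C k)) C.
Proof.
rewrite /candidate; case: ifP => [/andP[nv_gt0 /(coverP nv_gt0 C_over)] //|_].
exact: cover_trivial.
Qed.

Lemma candidate_encode N : wf_logic L N -> Defs.cover L N C ->
  candidate L C (pack (encode L N)) = encode L N.
Proof.
move=> wfN coverN; have nv_gt0 : 0 < nv N by case/and4P: wfN.
have : coverb L C (encode L N).
  by apply/(@coverP L (encode L N) nv_gt0 C C_over); apply/cover_encode.
by rewrite /candidate packK nv_gt0 => ->.
Qed.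

Lemma taut_approx n F : taut L (decode L (approx L C n)) F <->
  forall k, k <= n -> taut L (decode L (candidate L C k)) F.
Proof.
elim: n => [|n IH]; first by split=> [taut0 [|k] //|]; apply.
rewrite /= taut_nprod ?approx_nv_gt0 ?candidate_nv_gt0 // IH.
split=> [[tauts taut_n] k|tauts]; last by split=> [k le_kn|]; apply: tauts => //; exact: leqW.
by rewrite leq_eqVlt => /predU1P[->|/tauts].
Qed.

Lemma seq_approx_approx : seq_approx L (MC L C) (fun n => decode L (approx L C n)).
Proof.
split; first by move=> n; apply/decode_wf/approx_nv_gt0.
split=> [i j le_ji F /taut_approx taut_i|F].
  by apply/taut_approx => k le_kj; apply/taut_i/(leq_trans le_kj).
split=> [[wfF MCF] n|taut_all].
  apply/taut_approx => k _; apply: MCF (cover_candidate k).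
  exact/decode_wf/candidate_nv_gt0.
split=> [|N wfN coverN]; first by case: (taut_all 0).
apply/(taut_encode wfN); rewrite -(candidate_encode wfN coverN).
by move/taut_approx: (taut_all (pack (encode L N))); apply.
Qed.

End Approximation.

(** * Partial recursive functions *)

Definition computable k (f : seq nat -> nat) : Prop :=
  exists p, forall xs, size xs = k -> reval p xs (f xs).

Create HintDb computability.

Lemma computable_ext k f g :
  (forall xs, size xs = k -> f xs = g xs) -> computable k f -> computable k g.
Proof. by move=> fg [p Hp]; exists p => xs Hxs; rewrite -fg //; apply: Hp. Qed.

Lemma computable_nth k i : computable k (fun xs => nth 0 xs i).
Proof. by exists (RProj i) => xs _; apply: reval_proj. Qed.

Lemma programs_of_computable m (G : nat -> seq nat -> nat) (s : seq nat) :
  (forall i, i \in s -> computable m (G i)) ->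
  exists ps, forall xs, size xs = m ->
    List.Forall2 (fun p z => reval p xs z) ps [seq G i xs | i <- s].
Proof.
elim: s => [|i s IH] Gs; first by exists [::] => xs _; constructor.
have [p Hp] := Gs i (mem_head i s).
have [|ps Hps] := IH; first by move=> j js; apply: Gs; rewrite inE js orbT.
by exists (p :: ps) => xs Hxs; constructor; [apply: Hp | apply: Hps].
Qed.

Lemma computable_comp m n h (g : seq nat -> seq nat) :
  computable n h -> (forall xs, size xs = m -> size (g xs) = n) ->
  (forall i, i < n -> computable m (fun xs => nth 0 (g xs) i)) ->
  computable m (fun xs => h (g xs)).
Proof.
move=> [ph Hh] sizeg gi.
have [|ps Hps] := @programs_of_computable m (fun i xs => nth 0 (g xs) i) (iota 0 n).
  by move=> i; rewrite mem_iota => /gi.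
exists (RComp ph ps) => xs Hxs; apply: reval_comp; first exact: Hps.
by rewrite -(sizeg xs Hxs) -/(mkseq _ _) mkseq_nth; apply: Hh; apply: sizeg.
Qed.

Lemma computable_head k : computable k (head 0).
Proof. by apply: computable_ext (computable_nth k 0) => -[]. Qed.

Lemma computable_behead k h : computable k h -> computable k.+1 (fun ys => h (behead ys)).
Proof.
move=> Hh; apply: computable_comp Hh _ _ => [[|y ys] //= [] //|i _].
by apply: computable_ext (computable_nth _ i.+1) => -[|y ys].
Qed.

Lemma computable_cons k h e :
  computable k.+1 h -> computable k e -> computable k (fun xs => h (e xs :: xs)).
Proof.
move=> Hh He; apply: computable_comp Hh _ _ => [xs <- //|[|i] _].
  exact: He.
exact: computable_nth.
Qed.

(* A loop step reads its counter j and accumulator acc off the argument list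
   j :: acc :: xs; a function F j xs of a bound parameter j is computed on the
   argument list j :: xs. *)
Lemma computable_foldl_iota k N z s :
  computable k N -> computable k z ->
  computable k.+2 (fun ys => s (head 0 ys) (head 0 (behead ys)) (behead (behead ys))) ->
  computable k (fun xs => foldl (fun acc j => s j acc xs) (z xs) (iota 0 (N xs))).
Proof.
move=> HN [pz Hz] [ps Hs].
have Hrec : computable k.+1 (fun ys =>
    foldl (fun acc j => s j acc (behead ys)) (z (behead ys)) (iota 0 (head 0 ys))).
  exists (RPrec pz ps) => -[//|n xs] [Hxs] /=.
  elim: n => [|n IH]; first exact/reval_prec0/Hz.
  rewrite iotaSr foldl_rcons.
  by apply: reval_precS IH _; apply: (Hs [:: n, _ & xs]); rewrite /= Hxs.
exact: (computable_cons Hrec HN).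
Qed.

Lemma computable_iter k N z f :
  computable k N -> computable k z ->
  computable k.+1 (fun ys => f (head 0 ys) (behead ys)) ->
  computable k (fun xs => iter (N xs) (fun acc => f acc xs) (z xs)).
Proof.
move=> HN Hz /computable_behead Hf.
have := computable_foldl_iota (s := fun _ acc xs => f acc xs) HN Hz Hf.
apply: computable_ext => xs _.
by elim: (N xs) => [|n IH] //; rewrite iotaSr foldl_rcons IH.
Qed.

Lemma computable_succ k f : computable k f -> computable k (fun xs => (f xs).+1).
Proof.
move=> [p Hp]; exists (RComp RSucc [:: p]) => xs Hxs.
apply: (@reval_comp _ _ _ [:: f xs]); last exact: (reval_succ [:: f xs]).
by constructor; [apply: Hp | constructor].
Qed.

Lemma computable_const k c : computable k (fun _ => c).
Proof.
elim: c => [|c]; last exact: computable_succ.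
by exists RZero => xs _; apply: reval_zero.
Qed.

#[local] Hint Resolve computable_head computable_const computable_succ : computability.
#[local] Hint Extern 1 (computable _ (fun ys => ?f (behead ys))) =>
  apply: (computable_behead (h := f)) : computability.
#[local] Hint Extern 1 (computable _ (fun ys => ?f (behead (behead ys)))) =>
  apply: (computable_behead (h := fun ys => f (behead ys))) : computability.

Ltac computability := solve [auto 50 with computability nocore].

Lemma computable_pred k f : computable k f -> computable k (fun xs => (f xs).-1).
Proof.
apply: (computable_cons (h := fun ys => (head 0 ys).-1)).
have := computable_foldl_iota (s := fun j _ _ => j) (computable_head k.+1)
  (computable_const _ 0) (computable_head _).
apply: computable_ext => ys _.
by case: (head 0 ys) => [|n] //; rewrite iotaSr foldl_rcons.
Qed.

Lemma computable_add k f g :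
  computable k f -> computable k g -> computable k (fun xs => f xs + g xs).
Proof.
move=> Hf Hg.
apply: computable_ext
  (computable_iter (f := fun acc _ => acc.+1) Hg Hf _) => [xs _|].
  exact: iter_succn.
by computability.
Qed.

Lemma computable_sub k f g :
  computable k f -> computable k g -> computable k (fun xs => f xs - g xs).
Proof.
move=> Hf Hg.
apply: computable_ext
  (computable_iter (f := fun acc _ => acc.-1) Hg Hf _) => [xs _|].
  exact: iter_predn.
exact/computable_pred/computable_head.
Qed.

#[local] Hint Resolve computable_pred computable_add computable_sub : computability.

Lemma computable_mul k f g :
  computable k f -> computable k g -> computable k (fun xs => f xs * g xs).
Proof.
move=> Hf Hg.
apply: computable_ext
  (computable_iter (f := fun acc xs => f xs + acc) Hg (computable_const _ 0) _) => [xs _|].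
  exact: iter_addn_0.
by computability.
Qed.

#[local] Hint Resolve computable_mul : computability.

Lemma computable_exp k f g :
  computable k f -> computable k g -> computable k (fun xs => f xs ^ g xs).
Proof.
move=> Hf Hg.
apply: computable_ext
  (computable_iter (f := fun acc xs => f xs * acc) Hg (computable_const _ 1) _) => [xs _|].
  exact: iter_muln_1.
by computability.
Qed.

#[local] Hint Resolve computable_exp : computability.

Lemma computable_eq0 k f :
  computable k f -> computable k (fun xs => nat_of_bool (f xs == 0)).
Proof.
move=> Hf.
apply: computable_ext
  (computable_iter (f := fun _ _ => 0) Hf (computable_const _ 1) _) => [xs _|].
  by case: (f xs).
by computability.
Qed.

Lemma computable_if k b f g :
  computable k (fun xs => nat_of_bool (b xs)) -> computable k f -> computable k g ->
  computable k (fun xs => if b xs then f xs else g xs).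
Proof.
move=> Hb Hf Hg; have Hnb : computable k (fun xs => 1 - b xs) by computability.
apply: computable_ext (computable_add (computable_mul Hb Hf) (computable_mul Hnb Hg)) => xs _.
by case: (b xs); rewrite /= ?mul1n ?mul0n ?addn0.
Qed.

#[local] Hint Resolve computable_eq0 computable_if : computability.

Lemma computable_leq k f g :
  computable k f -> computable k g -> computable k (fun xs => nat_of_bool (f xs <= g xs)).
Proof.
move=> Hf Hg; apply: computable_ext (computable_eq0 (computable_sub Hf Hg)) => xs _.
by rewrite subn_eq0.
Qed.

Lemma computable_negb k b :
  computable k (fun xs => nat_of_bool (b xs)) -> computable k (fun xs => nat_of_bool (~~ b xs)).
Proof.
move=> Hb; have : computable k (fun xs => if b xs then 0 else 1) by computability.
by apply: computable_ext => xs _; case: (b xs).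
Qed.

Lemma computable_andb k b c :
  computable k (fun xs => nat_of_bool (b xs)) -> computable k (fun xs => nat_of_bool (c xs)) ->
  computable k (fun xs => nat_of_bool (b xs && c xs)).
Proof.
move=> Hb Hc; have : computable k (fun xs => if b xs then nat_of_bool (c xs) else 0).
  by computability.
by apply: computable_ext => xs _; case: (b xs).
Qed.

Lemma computable_implyb k b c :
  computable k (fun xs => nat_of_bool (b xs)) -> computable k (fun xs => nat_of_bool (c xs)) ->
  computable k (fun xs => nat_of_bool (b xs ==> c xs)).
Proof.
move=> Hb Hc; have : computable k (fun xs => if b xs then nat_of_bool (c xs) else 1).
  by computability.
by apply: computable_ext => xs _; case: (b xs).
Qed.

Lemma computable_odd k f :
  computable k f -> computable k (fun xs => nat_of_bool (odd (f xs))).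
Proof.
move=> Hf.
apply: computable_ext
  (computable_iter (f := fun acc _ => 1 - acc) Hf (computable_const _ 0) _) => [xs _|].
  by elim: (f xs) => //= n ->; case: odd.
by computability.
Qed.

#[local] Hint Resolve computable_leq computable_negb computable_andb computable_implyb
  computable_odd : computability.

Lemma foldl_addn_sum (F : nat -> nat) a s :
  foldl (fun acc j => acc + F j) a s = a + \sum_(j <- s) F j.
Proof. by elim: s a => [|j s IH] a /=; rewrite ?big_nil ?addn0 // big_cons IH addnA. Qed.

Lemma computable_family_step k F :
  computable k.+1 (fun ys => F (head 0 ys) (behead ys)) ->
  computable k.+2 (fun ys => F (head 0 ys) (behead (behead ys))).
Proof.
move=> HF; apply: (computable_comp (g := fun ys => head 0 ys :: behead (behead ys))) HF _ _.
  by move=> [|y [|y' ys]] //= [] ->.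
move=> [|i] _; first exact: computable_head.
by apply: computable_ext (computable_nth _ i.+2) => -[|y [|y' ys]].
Qed.

Lemma computable_sum k N F :
  computable k N -> computable k.+1 (fun ys => F (head 0 ys) (behead ys)) ->
  computable k (fun xs => \sum_(0 <= j < N xs) F j xs).
Proof.
move=> HN /computable_family_step HF.
have := computable_foldl_iota (s := fun j acc xs => acc + F j xs) HN (computable_const _ 0)
  (computable_add (computable_behead (computable_head _)) HF).
apply: computable_ext => xs _.
by rewrite foldl_addn_sum add0n /index_iota subn0.
Qed.

#[local] Hint Resolve computable_sum : computability.

Lemma divn_sum x m : 0 < m -> x %/ m = \sum_(0 <= j < x) (j.+1 * m <= x : nat).
Proof.
move=> m_gt0; rewrite (eq_bigr (fun j => (j < x %/ m : nat))) => [|j _].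
  by rewrite sum_ltn; apply/esym/minn_idPr/leq_div.
by rewrite leq_divRL.
Qed.

Lemma computable_div k f g :
  computable k f -> computable k g -> computable k (fun xs => f xs %/ g xs).
Proof.
move=> Hf Hg.
have : computable k (fun xs =>
  if 0 < g xs then \sum_(0 <= j < f xs) (j.+1 * g xs <= f xs : nat) else 0).
  by computability.
by apply: computable_ext => xs _; case: posnP => [->|/divn_sum <-]; rewrite ?divn0.
Qed.

Lemma computable_mod k f g :
  computable k f -> computable k g -> computable k (fun xs => f xs %% g xs).
Proof.
move=> Hf Hg; have := computable_sub Hf (computable_mul (computable_div Hf Hg) Hg).
by apply: computable_ext => xs _; rewrite {1}(divn_eq (f xs) (g xs)) addKn.
Qed.

#[local] Hint Resolve computable_div computable_mod : computability.

Lemma computable_all_iota k N P :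
  computable k N -> computable k.+1 (fun ys => nat_of_bool (P (head 0 ys) (behead ys))) ->
  computable k (fun xs => nat_of_bool (all (fun j => P j xs) (iota 0 (N xs)))).
Proof.
move=> HN HP; have : computable k (fun xs => \sum_(0 <= j < N xs) ~~ P j xs == 0) by computability.
apply: computable_ext => xs _.
rewrite /index_iota subn0 sum_nat_seq_eq0; congr nat_of_bool.
by apply: eq_all => j /=; rewrite eqb0 negbK.
Qed.

#[local] Hint Resolve computable_all_iota : computability.

Lemma rev_iota n : rev (iota 0 n) = [seq n - j.+1 | j <- iota 0 n].
Proof.
apply: (@eq_from_nth _ 0) => [|i]; rewrite size_rev ?size_map // size_iota => i_lt.
by rewrite nth_rev ?size_iota // (nth_map 0) ?size_iota // !nth_iota //; lia.
Qed.

Lemma computable_foldr_iota k N z s :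
  computable k N -> computable k z ->
  computable k.+2 (fun ys => s (head 0 ys) (head 0 (behead ys)) (behead (behead ys))) ->
  computable k (fun xs => foldr (fun j acc => s j acc xs) (z xs) (iota 0 (N xs))).
Proof.
move=> HN Hz Hs.
have Hs' : computable k.+2 (fun ys =>
    s (N (behead (behead ys)) - (head 0 ys).+1) (head 0 (behead ys)) (behead (behead ys))).
  pose g ys := N (behead (behead ys)) - (head 0 ys).+1 :: behead ys.
  apply: (computable_comp (g := g)) Hs _ _.
    by move=> [|y ys] //= [] ->.
  move=> [|i] _ /=; first by computability.
  by apply: computable_ext (computable_nth _ i.+1) => ys _; rewrite /= nth_behead.
have := computable_foldl_iota (s := fun j acc xs => s (N xs - j.+1) acc xs) HN Hz Hs'.
apply: computable_ext => xs _; rewrite -[RHS]foldl_rev rev_iota.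
by elim: (iota 0 (N xs)) (z xs) => //= j js IH acc; rewrite IH.
Qed.

Lemma computable_cpair k f g :
  computable k f -> computable k g -> computable k (fun xs => cpair (f xs) (g xs)).
Proof. by move=> Hf Hg; rewrite /cpair; computability. Qed.

#[local] Hint Resolve computable_cpair : computability.

Lemma code_seq_foldr s : code_seq s = foldr (fun x acc => (cpair x acc).+1) 0 s.
Proof. by elim: s => //= x s ->. Qed.

Lemma computable_code_mkseq k N F :
  computable k N -> computable k.+1 (fun ys => F (head 0 ys) (behead ys)) ->
  computable k (fun xs => code_seq (mkseq (fun j => F j xs) (N xs))).
Proof.
move=> HN /computable_family_step HF.
have step : computable k.+2 (fun ys =>
    (cpair (F (head 0 ys) (behead (behead ys))) (head 0 (behead ys))).+1) by computability.
have := computable_foldr_iota (s := fun j acc xs => (cpair (F j xs) acc).+1) HN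
  (computable_const _ 0) step.
by apply: computable_ext => xs _; rewrite code_seq_foldr foldr_map.
Qed.

Lemma computable_code_filter_iota k N P :
  computable k N -> computable k.+1 (fun ys => nat_of_bool (P (head 0 ys) (behead ys))) ->
  computable k (fun xs => code_seq [seq j <- iota 0 (N xs) | P j xs]).
Proof.
move=> HN /(@computable_family_step _ (fun j xs => nat_of_bool (P j xs))) HP.
have step : computable k.+2 (fun ys => if P (head 0 ys) (behead (behead ys))
    then (cpair (head 0 ys) (head 0 (behead ys))).+1 else head 0 (behead ys)) by computability.
have := computable_foldr_iota (s := fun j acc xs => if P j xs then (cpair j acc).+1 else acc)
  HN (computable_const _ 0) step.
apply: computable_ext => xs _; rewrite code_seq_foldr.
by elim: (iota 0 (N xs)) => //= j js ->; case: (P j xs).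
Qed.

#[local] Hint Resolve computable_code_mkseq computable_code_filter_iota : computability.

Lemma computable_nth_seq k (l : seq nat) e :
  computable k e -> computable k (fun xs => nth 0 l (e xs)).
Proof.
elim: l e => [|x l IH] e He.
  by apply: computable_ext (computable_const _ 0) => xs _; rewrite nth_nil.
have := computable_if (computable_eq0 He) (computable_const _ x) (IH _ (computable_pred He)).
by apply: computable_ext => xs _; case: (e xs).
Qed.

Lemma computable_all_seq (T : Type) k (s : seq T) P :
  (forall x, computable k (fun xs => nat_of_bool (P x xs))) ->
  computable k (fun xs => nat_of_bool (all (fun x => P x xs) s)).
Proof. by move=> HP; elim: s => [|x s IH] /=; computability. Qed.

#[local] Hint Resolve computable_nth_seq computable_all_seq : computability.

Lemma computable_tuple_index (T : Type) k a (s : seq T) G :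
  computable k a -> (forall x, List.In x s -> computable k (G x)) ->
  computable k (fun xs => tuple_index (a xs) [seq G x xs | x <- s]).
Proof.
move=> Ha HG; rewrite /tuple_index.
suff gen z : computable k z ->
    computable k (fun xs => foldl (fun acc y => acc * a xs + y) (z xs) [seq G x xs | x <- s]).
  by apply: gen; computability.
elim: s HG z => [|x s IH] HG z Hz /=; first exact: Hz.
have Gx := HG x (or_introl erefl).
by apply: IH => [y Hy|]; [apply: HG; right | computability].
Qed.

Lemma computable_tuple_index_iota k a r F :
  computable k a -> computable k r -> computable k.+1 (fun ys => F (head 0 ys) (behead ys)) ->
  computable k (fun xs => tuple_index (a xs) [seq F j xs | j <- iota 0 (r xs)]).
Proof.
move=> Ha Hr /computable_family_step HF.
have step : computable k.+2 (fun ys =>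
    head 0 (behead ys) * a (behead (behead ys)) + F (head 0 ys) (behead (behead ys))).
  by computability.
have := computable_foldl_iota (s := fun j acc xs => acc * a xs + F j xs) Hr
  (computable_const _ 0) step.
apply: computable_ext => xs _.
rewrite /tuple_index; move: (iota 0 (r xs)) => js.
by elim: js 0 => //= j js IH acc; rewrite IH.
Qed.

#[local] Hint Resolve computable_tuple_index_iota : computability.

(** * Effectiveness of the approximation *)

Lemma computable_digit k a x p : computable k a -> computable k x -> computable k p ->
  computable k (fun xs => digit (a xs) (x xs) (p xs)).
Proof. by move=> *; rewrite /digit; computability. Qed.

Lemma computable_nbit k D z : computable k D -> computable k z ->
  computable k (fun xs => nat_of_bool (nbit (D xs) (z xs))).
Proof. by move=> *; rewrite /nbit; computability. Qed.

#[local] Hint Resolve computable_digit computable_nbit : computability.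

Lemma computable_entry L k a T c t :
  computable k a -> computable k T -> computable k c -> computable k t ->
  computable k (fun xs => entry L (a xs) (T xs) (c xs) (t xs)).
Proof. by move=> *; rewrite /entry; computability. Qed.

#[local] Hint Resolve computable_entry : computability.

Lemma computable_coded_feval L k a T u F :
  computable k a -> computable k T -> computable k u ->
  computable k (fun xs => coded_feval L (a xs) (T xs) (u xs) F).
Proof.
move=> Ha HT Hu; elim/formula_nested_ind: F => [n|c args IH] /=; first by computability.
by apply: computable_entry => //; [computability | apply: computable_tuple_index].
Qed.

Definition ncomputable k (m : seq nat -> nlogic) :=
  [/\ computable k (fun xs => nl_nv (m xs)), computable k (fun xs => nl_des (m xs))
    & computable k (fun xs => nl_tabs (m xs))].

Lemma ncomputable_nv k m : ncomputable k m -> computable k (fun xs => nl_nv (m xs)).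
Proof. by case. Qed.

Lemma ncomputable_des k m : ncomputable k m -> computable k (fun xs => nl_des (m xs)).
Proof. by case. Qed.

Lemma ncomputable_tabs k m : ncomputable k m -> computable k (fun xs => nl_tabs (m xs)).
Proof. by case. Qed.

Lemma ncomputable_behead k m : ncomputable k m -> ncomputable k.+1 (fun ys => m (behead ys)).
Proof.
case=> Ha HD HT.
by split; [exact: computable_behead Ha | exact: computable_behead HD | exact: computable_behead HT].
Qed.

Lemma ncomputable_ext k m m' :
  (forall xs, size xs = k -> m xs = m' xs) -> ncomputable k m -> ncomputable k m'.
Proof.
move=> mm' [Ha HD HT].
by split; [apply: computable_ext Ha | apply: computable_ext HD | apply: computable_ext HT]
  => xs /mm' ->.
Qed.

Lemma ncomputable_NLogic k a D T : computable k a -> computable k D -> computable k T ->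
  ncomputable k (fun xs => NLogic (a xs) (D xs) (T xs)).
Proof. by split. Qed.

Lemma ncomputable_if k b m m' : computable k (fun xs => nat_of_bool (b xs)) ->
  ncomputable k m -> ncomputable k m' -> ncomputable k (fun xs => if b xs then m xs else m' xs).
Proof.
move=> Hb [Ha HD HT] [Ha' HD' HT']; split.
- by apply: computable_ext (computable_if Hb Ha Ha') => xs _; case: (b xs).
- by apply: computable_ext (computable_if Hb HD HD') => xs _; case: (b xs).
by apply: computable_ext (computable_if Hb HT HT') => xs _; case: (b xs).
Qed.

#[local] Hint Resolve ncomputable_nv ncomputable_des ncomputable_tabs ncomputable_behead
  ncomputable_NLogic ncomputable_if computable_coded_feval : computability.

Lemma computable_holds_coded L k m u A : ncomputable k m -> computable k u ->
  computable k (fun xs => nat_of_bool (holds_coded L (m xs) (u xs) A)).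
Proof. by move=> *; rewrite /holds_coded; computability. Qed.

#[local] Hint Resolve computable_holds_coded : computability.

Lemma computable_coverb L C k m : ncomputable k m ->
  computable k (fun xs => nat_of_bool (coverb L C (m xs))).
Proof. by move=> Hm; rewrite /coverb; computability. Qed.

Lemma computable_prod_entry L k m m' c t : ncomputable k m -> ncomputable k m' ->
  computable k c -> computable k t ->
  computable k (fun xs => prod_entry L (m xs) (m' xs) (c xs) (t xs)).
Proof. by move=> *; rewrite /prod_entry /=; computability. Qed.

#[local] Hint Resolve computable_coverb computable_prod_entry : computability.

Lemma ncomputable_nprod L k m m' : ncomputable k m -> ncomputable k m' ->
  ncomputable k (fun xs => nprod L (m xs) (m' xs)).
Proof. by move=> *; rewrite /nprod /encode_des /encode_tabs /=; computability. Qed.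

Lemma computable_pair2 k x y : computable k x -> computable k y ->
  computable k (fun xs => pair2 (x xs) (y xs)).
Proof.
move=> Hx Hy; have : computable k (fun xs => (2 ^ x xs * (y xs + y xs).+1).-1) by computability.
by apply: computable_ext => xs _; rewrite addnn.
Qed.

Lemma computable_unpair1 k f : computable k f -> computable k (fun xs => unpair1 (f xs)).
Proof. by move=> Hf; rewrite /unpair1; computability. Qed.

Lemma computable_unpair2 k f : computable k f -> computable k (fun xs => unpair2 (f xs)).
Proof. by move=> Hf; rewrite /unpair2; have := computable_unpair1 Hf; computability. Qed.

#[local] Hint Resolve ncomputable_nprod computable_pair2 computable_unpair1 computable_unpair2
  : computability.

Lemma computable_pack k m : ncomputable k m -> computable k (fun xs => pack (m xs)).
Proof. by move=> Hm; rewrite /pack; computability. Qed.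

Lemma ncomputable_unpack k f : computable k f -> ncomputable k (fun xs => unpack (f xs)).
Proof. by move=> Hf; rewrite /unpack; computability. Qed.

#[local] Hint Resolve computable_pack ncomputable_unpack : computability.

Lemma ncomputable_candidate L C k f : computable k f ->
  ncomputable k (fun xs => candidate L C (f xs)).
Proof. by move=> Hf; rewrite /candidate /trivial_nlogic; computability. Qed.

#[local] Hint Resolve ncomputable_candidate : computability.

Lemma pack_approx L C n : pack (approx L C n) =
  foldl (fun acc j => pack (nprod L (unpack acc) (candidate L C j.+1)))
    (pack (candidate L C 0)) (iota 0 n).
Proof. by elim: n => [|n IH] //; rewrite iotaSr foldl_rcons -IH packK. Qed.

Lemma ncomputable_approx L C : ncomputable 1 (fun xs => approx L C (head 0 xs)).
Proof.
pose step j acc (_ : seq nat) := pack (nprod L (unpack acc) (candidate L C j.+1)).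
have : computable 1 (fun xs => pack (approx L C (head 0 xs))).
  have Hstep : computable 3 (fun ys =>
      step (head 0 ys) (head 0 (behead ys)) (behead (behead ys))) by rewrite /step; computability.
  have Hz : computable 1 (fun _ => pack (candidate L C 0)) by computability.
  have := computable_foldl_iota (computable_head 1) Hz Hstep.
  by apply: computable_ext => xs _; rewrite pack_approx.
by move=> /ncomputable_unpack; apply: ncomputable_ext => xs _; rewrite packK.
Qed.


Lemma code_decodeE L m : code_logic (decode L m) =
  code_seq [:: nl_nv m; code_seq [seq z <- iota 0 (nl_nv m) | nbit (nl_des m) z];
    code_seq (mkseq (fun c => code_seq (mkseq (entry L (nl_nv m) (nl_tabs m) c)
                                              (nl_nv m ^ nth 0 L c))) (size L))].
Proof. by rewrite /code_logic /= /mkseq -map_comp. Qed.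

Lemma computable_code_nil k : computable k (fun _ => code_seq [::]).
Proof. exact: computable_const. Qed.

Lemma computable_code_cons k x s : computable k x -> computable k (fun xs => code_seq (s xs)) ->
  computable k (fun xs => code_seq (x xs :: s xs)).
Proof. by move=> Hx Hs /=; computability. Qed.

#[local] Hint Resolve computable_code_nil computable_code_cons : computability.

Lemma computable_code_decode L k m : ncomputable k m ->
  computable k (fun xs => code_logic (decode L (m xs))).
Proof.
move=> Hm; apply: computable_ext (fun xs _ => esym (code_decodeE L (m xs))) _.
by have := ncomputable_behead (ncomputable_behead Hm); computability.
Qed.

Theorem proposition9 (L : lang) (C : calculus) :
  calculus_over L C ->
  exists M : nat -> logic, seq_approx L (MC L C) M /\ effective M.
Proof.
move=> C_over; exists (fun n => decode L (approx L C n)).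
split; first exact: seq_approx_approx.
have [p Hp] := computable_code_decode L (ncomputable_approx L C).
by exists p => n; apply: (Hp [:: n]).
Qed.
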